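(* Let $d\ge 2$, $k\ge 2$ and $n>d$ be integers. Then $$m^*(n,d,k)\le \min_{\substack{2\le i\le\lceil n/2\rceil\\ k_1,k_2\ge 1,\ k_1+k_2=k}}\Big\{m^*\big(\lceil n/i\rceil,d,k_2\big)+i\cdot m^*\big(\lceil n/i\rceil,\lfloor d/2\rfloor,k_1\big)\Big\}.$$
   Context: For a binary matrix $M$ and a nonempty set $S$ of its columns, $S$ is a stopping set if the submatrix formed by $S$ has no row with exactly one $1$; the stopping distance $s(M)$ is the minimum size of a stopping set ($+\infty$ if none). For positive integers $d,k$, $M$ is $(d,k)$-decodable if $s(M)\ge d+1$ and every column of $M$ has exactly $k$ ones. For positive integers $n,d,k$ (with $d$ possibly exceeding $n$), $m^*(n,d,k)$ is the minimum $m$ such that an $m\times n$ $(d,k)$-decodable binary matrix exists. *)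

From mathcomp Require Import all_boot all_algebra.
From mathcomp Require Import zify.

Set Implicit Arguments.
Unset Strict Implicit.
Unset Printing Implicit Defensive.

Definition stopping_set (m n : nat) (M : 'M[bool]_(m, n)) (S : {set 'I_n}) : bool :=
  (S != set0) && [forall i : 'I_m, #|[set j in S | M i j]| != 1].

(* s(M) >= t : every stopping set has size >= t (this is exactly
   min{|S| : S stopping} >= t, with min of the empty family = +oo). *)
Definition stopping_distance_ge (m n : nat) (M : 'M[bool]_(m, n)) (t : nat) : bool :=
  [forall S : {set 'I_n}, stopping_set M S ==> (t <= #|S|)].

Definition decodable (m n : nat) (M : 'M[bool]_(m, n)) (d k : nat) : bool :=
  stopping_distance_ge M d.+1 && [forall j : 'I_n, #|[set i | M i j]| == k].

Definition decodable_exists (n d k m : nat) : bool :=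
  [exists M : 'M[bool]_(m, n), decodable M d k].

(* Existence for k >= 1: give each column k private rows. *)
Lemma decodable_exists_some (n d k : nat) :
  exists m, decodable_exists n d k m || (k == 0).
Proof.
case: k => [|k]; first by exists 0; rewrite orbT.
exists (n * k.+1); rewrite orbF; apply/existsP.
exists (\matrix_(i < n * k.+1, j < n) (i %/ k.+1 == j)%N)%R.
apply/andP; split.
- apply/forallP => S; apply/implyP => /andP [/set0Pn [j0 Hj0] /forallP HS].
  have Hlt : j0 * k.+1 < n * k.+1 by rewrite ltn_pmul2r.
  have := HS (Ordinal Hlt).
  suff -> : [set j in S | (\matrix_(i < n * k.+1, j < n) (i %/ k.+1 == j)%N)%R
              (Ordinal Hlt) j] = [set j0] by rewrite cards1.
  apply/setP => j; rewrite !inE mxE /= mulnK //.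
  case: (eqVneq j0 j) => [<-|Hne]; first by rewrite Hj0 eqxx.
  by apply/andP => -[_ /eqP /val_inj E]; rewrite E eqxx in Hne.
- apply/forallP => j.
  have Hf : forall r : 'I_k.+1, j * k.+1 + r < n * k.+1.
    move=> r; have := ltn_ord r; have := ltn_ord j; nia.
  have -> : [set i | (\matrix_(i < n * k.+1, j < n) (i %/ k.+1 == j)%N)%R i j]
          = [set Ordinal (Hf r) | r : 'I_k.+1].
    apply/setP => i; rewrite inE mxE.
    apply/eqP/imsetP => [E|[r _ ->]].
    + exists (Ordinal (ltn_pmod i (ltn0Sn k))) => //.
      by apply: val_inj => /=; rewrite -E -divn_eq.
    + by rewrite divnDl ?dvdn_mull // mulnK // divn_small // addn0.
  rewrite card_imset ?card_ord //.
  by move=> r1 r2 /(congr1 val) /= /eqP; rewrite eqn_add2l => /eqP /val_inj.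
Qed.

(* m^*(n,d,k): the minimum m such that an m x n (d,k)-decodable matrix
   exists.  (For k = 0 no such matrix exists; the value is then 0 by
   convention, a case never used below.) *)
Definition m_star (n d k : nat) : nat := ex_minn (decodable_exists_some n d k).

Definition ceil_div (n i : nat) : nat := (n + i.-1) %/ i.

From mathcomp Require Import all_boot all_algebra.
From mathcomp Require Import zify.

Set Implicit Arguments.
Unset Strict Implicit.
Unset Printing Implicit Defensive.

(* Split the n columns into i consecutive blocks of length N; column j lies
   in block  blk j = j / N  at position  pos j = j mod N.  Take a
   (d,k2)-decodable A with N columns and a (floor(d/2),k1)-decodable B with
   N columns.  The glued matrix has the rows of A applied to positions
   (ignoring blocks), and, for every block g, a copy of B supported on block
   g.  Each column then has k2 + k1 ones.  A stopping set S meeting two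
   blocks restricts, on each of them, to a stopping set of B, so it has at
   least 2 (floor(d/2) + 1) > d columns; a stopping set inside one block is
   mapped injectively by pos onto a stopping set of A, so it has > d columns. *)

Lemma m_star_spec (n d k : nat) : 0 < k -> decodable_exists n d k (m_star n d k).
Proof.
move=> k_gt0; rewrite /m_star; case: ex_minnP => m Hm _.
by case/orP: Hm => // /eqP k0; rewrite k0 in k_gt0.
Qed.

Lemma m_star_min (n d k m : nat) : decodable_exists n d k m -> m_star n d k <= m.
Proof.
move=> Hm; rewrite /m_star; case: ex_minnP => m0 _ min_m0.
by apply: min_m0; rewrite Hm.
Qed.

Lemma card_set_sum (T1 T2 : finType) (P : pred (T1 + T2)) :
  #|[set y | P y]| = #|[set a | P (inl a)]| + #|[set b | P (inr b)]|.
Proof. by rewrite -!sum1dep_card big_sumType. Qed.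

Lemma decodable_of_family (R : finType) (n d k : nat) (F : R -> 'I_n -> bool) :
  (forall S : {set 'I_n}, S != set0 ->
     (forall x, #|[set j in S | F x j]| != 1) -> d < #|S|) ->
  (forall j, #|[set x | F x j]| = k) ->
  decodable_exists n d k #|R|.
Proof.
move=> stopF weightF; apply/existsP.
pose M : 'M[bool]_(#|R|, n) := (\matrix_(x, j) F (enum_val x) j)%R.
have rowM x j : M (enum_rank x) j = F x j by rewrite mxE enum_rankK.
exists M; apply/andP; split.
- apply/forallP => S; apply/implyP => /andP [S0 /forallP stopS].
  apply: (stopF S S0) => x; have := stopS (enum_rank x).
  suff -> : [set j in S | M (enum_rank x) j] = [set j in S | F x j] by [].
  by apply/setP => j; rewrite !inE rowM.
- apply/forallP => j; rewrite -(weightF j).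
  have -> : [set x | F x j] = enum_val @: [set x | M x j].
    apply/setP => y; rewrite inE; apply/idP/imsetP => [Fy|[x]].
      by exists (enum_rank y); rewrite ?inE ?rowM ?enum_rankK.
    by rewrite inE mxE => Fx ->.
  by rewrite card_imset //; apply: enum_val_inj.
Qed.

Lemma stopping_pullback (m N n t : nat) (M : 'M[bool]_(m, N))
    (f : 'I_n -> 'I_N) (S : {set 'I_n}) :
  stopping_distance_ge M t -> {in S &, injective f} -> S != set0 ->
  (forall a, #|[set j in S | M a (f j)]| != 1) -> t <= #|S|.
Proof.
move=> /forallP stopM injf S0 rowsS.
have row_image a : f @: [set j in S | M a (f j)] = [set r in f @: S | M a r].
  apply/setP => r; rewrite inE.
  apply/imsetP/andP => [[j]|[/imsetP [j Sj ->] Maj]].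
    by rewrite inE => /andP [Sj Maj] ->; split => //; apply: imset_f.
  by exists j; rewrite ?inE ?Sj.
rewrite -(card_in_imset injf); apply: (implyP (stopM (f @: S))).
apply/andP; split; first by rewrite imset_eq0.
apply/forallP => a; rewrite -row_image card_in_imset ?rowsS //.
by move=> x y; rewrite !inE => /andP [Sx _] /andP [Sy _]; apply: injf.
Qed.

Section Gluing.

Variables (n N i : nat).
Hypothesis N_gt0 : 0 < N.
Hypothesis n_le_iN : n <= i * N.

Definition pos (j : 'I_n) : 'I_N := Ordinal (ltn_pmod j N_gt0).

Lemma blk_lt (j : 'I_n) : j %/ N < i.
Proof. by rewrite ltn_divLR //; have := ltn_ord j; lia. Qed.

Definition blk (j : 'I_n) : 'I_i := Ordinal (blk_lt j).

Lemma blk_pos_inj (j j' : 'I_n) : blk j = blk j' -> pos j = pos j' -> j = j'.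
Proof.
move=> /(congr1 val) /= Eblk /(congr1 val) /= Epos; apply: val_inj.
by rewrite /= (divn_eq j N) (divn_eq j' N) Eblk Epos.
Qed.

Lemma pos_inj_in_block (S : {set 'I_n}) (g : 'I_i) :
  {in S, forall j, blk j = g} -> {in S &, injective pos}.
Proof. by move=> Sg x y Sx Sy; apply: blk_pos_inj; rewrite Sg ?Sg. Qed.

Variables (m2 m1 : nat) (A : 'M[bool]_(m2, N)) (B : 'M[bool]_(m1, N)).

Definition glued (y : 'I_m2 + 'I_i * 'I_m1) (j : 'I_n) : bool :=
  match y with
  | inl a => A a (pos j)
  | inr (g, b) => (g == blk j) && B b (pos j)
  end.

(* Column weights add: k2 from A, and k1 from the copy of B on its block. *)
Lemma glued_weight (k2 k1 : nat) :
  (forall r, #|[set a | A a r]| = k2) -> (forall r, #|[set b | B b r]| = k1) ->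
  forall j, #|[set y | glued y j]| = k2 + k1.
Proof.
move=> weightA weightB j; rewrite card_set_sum /= weightA; congr (_ + _).
have -> : [set y : 'I_i * 'I_m1 | glued (inr y) j]
        = setX [set blk j] [set b | B b (pos j)].
  by apply/setP => -[g b]; rewrite !inE.
by rewrite cardsX cards1 mul1n weightB.
Qed.

Variable d : nat.
Hypothesis stopA : stopping_distance_ge A d.+1.
Hypothesis stopB : stopping_distance_ge B (d %/ 2).+1.

Section StoppingSet.

Variable S : {set 'I_n}.
Hypothesis S_stop : forall y, #|[set j in S | glued y j]| != 1.

Definition block_part (g : 'I_i) : {set 'I_n} := [set j in S | blk j == g].

(* The block of any column of a glued stopping set is a stopping set of B. *)
Lemma block_part_large (j : 'I_n) : j \in S -> d %/ 2 < #|block_part (blk j)|.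
Proof.
move=> Sj; have part_nonempty : block_part (blk j) != set0.
  by apply/set0Pn; exists j; rewrite inE Sj eqxx.
apply: (stopping_pullback stopB _ part_nonempty).
  by apply: (@pos_inj_in_block _ (blk j)) => x; rewrite inE => /andP [_ /eqP].
move=> b; have := S_stop (inr (blk j, b)).
suff -> : [set x in S | glued (inr (blk j, b)) x]
        = [set x in block_part (blk j) | B b (pos x)] by [].
by apply/setP => x; rewrite !inE /= eq_sym andbA.
Qed.

Lemma block_part_sub (g : 'I_i) : block_part g \subset S.
Proof. by apply/subsetP => x; rewrite inE => /andP []. Qed.

(* Columns in two different blocks force more than d columns: the two
   block parts are disjoint subsets of S, each larger than d / 2. *)
Lemma two_blocks_large (j0 j1 : 'I_n) :
  j0 \in S -> j1 \in S -> blk j0 != blk j1 -> d < #|S|.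
Proof.
move=> Sj0 Sj1 blk01.
have large0 := block_part_large Sj0; have large1 := block_part_large Sj1.
set P0 := block_part (blk j0) in large0 *; set P1 := block_part (blk j1) in large1 *.
have disjoint01 : [disjoint P0 & P1].
  apply/pred0P => j; rewrite /= !inE.
  by apply/negP => /andP [/andP [_ /eqP ->] /andP [_ /eqP E]]; rewrite E eqxx in blk01.
have card_union : #|P0 :|: P1| = #|P0| + #|P1|.
  by apply/eqP; rewrite (leq_card_setU _ _).2.
have union_le : #|P0 :|: P1| <= #|S|.
  by apply: subset_leq_card; rewrite subUset !block_part_sub.
lia.
Qed.

Lemma glued_stopping : S != set0 -> d < #|S|.
Proof.
case/set0Pn=> j0 Sj0 /=.
case: (boolP [exists j in S, blk j != blk j0]) => [/existsP [j1 /andP [Sj1 blk10]]|].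
  by apply: (two_blocks_large Sj0 Sj1); rewrite eq_sym.
rewrite negb_exists_in => /forall_inP one_block.
have S0 : S != set0 by apply/set0Pn; exists j0.
apply: (stopping_pullback stopA _ S0) => [|a].
  by apply: (@pos_inj_in_block _ (blk j0)) => j /one_block /negPn /eqP.
by have := S_stop (inl a).
Qed.

End StoppingSet.

End Gluing.

Lemma ceil_div_cover (n i : nat) : 0 < i -> n <= i * ceil_div n i.
Proof.
move=> i_gt0; have := divn_eq (n + i.-1) i; have := ltn_pmod (n + i.-1) i_gt0.
rewrite /ceil_div; nia.
Qed.

(* The gluing bound. *)
Theorem theorem5p6 (n d k : nat) :
  2 <= d -> 2 <= k -> d < n ->
  forall i k1 k2 : nat,
    2 <= i -> i <= ceil_div n 2 ->
    1 <= k1 -> 1 <= k2 -> k1 + k2 = k ->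
    m_star n d k <=
      m_star (ceil_div n i) d k2 + i * m_star (ceil_div n i) (d %/ 2) k1.
Proof.
move=> _ _ d_lt_n i k1 k2 i_ge2 _ k1_gt0 k2_gt0 <-.
set N := ceil_div n i.
have N_gt0 : 0 < N by rewrite /N /ceil_div divn_gt0; lia.
have cover : n <= i * N by apply: ceil_div_cover; lia.
have /existsP [A /andP [stopA /forallP weightA]] := m_star_spec N d k2_gt0.
have /existsP [B /andP [stopB /forallP weightB]] := m_star_spec N (d %/ 2) k1_gt0.
apply: m_star_min; rewrite addnC.
have -> : m_star N d k2 + i * m_star N (d %/ 2) k1
        = #|{: 'I_(m_star N d k2) + 'I_i * 'I_(m_star N (d %/ 2) k1)}|.
  by rewrite card_sum card_prod !card_ord.
apply: (decodable_of_family (F := glued N_gt0 cover A B)).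
- by move=> S S0 S_stop; apply: (glued_stopping stopA stopB S_stop).
- by apply: glued_weight => r; apply/eqP.
Qed.
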